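(* Let $\mathbf C$ be a clone $\tau$-algebra and $c\in C$. If $c$ is $n$-central for some $n$, then for every $m\ge1$: $c$ is $m$-central if and only if $m\ge\gamma(c)$.
   Context: A clone $\tau$-algebra is an algebra $\mathbf C=(C,\sigma^{\mathbf C}\ (\sigma\in\tau),q_n^{\mathbf C}\ (n\ge0),\mathsf e_i^{\mathbf C}\ (i\ge1))$ with $\mathsf e_i$ nullary, $q_n$ of arity $n+1$, satisfying: (C1) $q_n(\mathsf e_i,x_1,\dots,x_n)=x_i$ ($1\le i\le n$); (C2) $q_n(\mathsf e_j,x_1,\dots,x_n)=\mathsf e_j$ ($j>n$); (C3) $q_n(x,\mathsf e_1,\dots,\mathsf e_n)=x$; (C4) $q_k(x,y_1,\dots,y_k)=q_n(x,y_1,\dots,y_k,\mathsf e_{k+1},\dots,\mathsf e_n)$ ($n>k$); (C5) $q_n(q_n(x,\mathbf y),\mathbf z)=q_n(x,q_n(y_1,\mathbf z),\dots,q_n(y_n,\mathbf z))$; (C6) $q_n(\sigma(x_1,\dots,x_k),\mathbf y)=\sigma(q_n(x_1,\mathbf y),\dots,q_n(x_k,\mathbf y))$ for $\sigma\in\tau$ of arity $k$. An element $a$ is independent of $\mathsf e_n$ if $q_n(a,\mathsf e_1,\dots,\mathsf e_{n-1},\mathsf e_{n+1})=a$, dependent otherwise; $\gamma(a)$ is $\omega$ if $a$ depends on infinitely many $\mathsf e_i$, $0$ if on none, otherwise the largest $i$ with $a$ dependent on $\mathsf e_i$. For $a,b\in C$, $\theta(a,b)$ is the smallest congruence of $\mathbf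 C$ containing $(a,b)$. An element $c$ is $n$-central if $\theta(c,\mathsf e_1),\dots,\theta(c,\mathsf e_n)$ is an $n$-tuple of complementary factor congruences, i.e. $\bigcap_i\theta(c,\mathsf e_i)$ is the identity relation and for all $a_1,\dots,a_n\in C$ there is a unique $u\in C$ with $a_i\,\theta(c,\mathsf e_i)\,u$ for all $i$; equivalently, $(a_1,\dots,a_n)\mapsto q_n(c,a_1,\dots,a_n)$ is a homomorphism $\mathbf C^n\to\mathbf C$ satisfying $q_n(c,x,\dots,x)=x$ and $q_n(c,q_n(c,x_{11},\dots,x_{1n}),\dots,q_n(c,x_{n1},\dots,x_{nn}))=q_n(c,x_{11},\dots,x_{nn})$. *)

From mathcomp Require Import all_boot.
From Stdlib Require Import ClassicalEpsilon.
Set Implicit Arguments. Unset Strict Implicit. Unset Printing Implicit Defensive.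

Record signature := Signature { sym : Type; arity : sym -> nat }.

(* Conventions: an n-tuple is a function 'I_n -> C; the (0-based) position i
   of a tuple corresponds to the paper's (1-based) index i+1.
   The nullary constants e_i (i >= 1) are [ce i]; [ce 0] is an unused junk
   value (no axiom mentions it; nullary operations do not affect congruences). *)
Record clone_algebra (tau : signature) := CloneAlgebra {
  car :> Type;
  sop : forall s : sym tau, ('I_(arity s) -> car) -> car;
  cq  : forall n : nat, car -> ('I_n -> car) -> car;
  ce  : nat -> car;
  ax_C1 : forall n (x : 'I_n -> car) (i : 'I_n), cq (ce i.+1) x = x i;
  ax_C2 : forall n (x : 'I_n -> car) j, n < j -> cq (ce j) x = ce j;
  ax_C3 : forall n a, cq a (fun i : 'I_n => ce i.+1) = a;
  ax_C4 : forall k n, k < n -> forall a (y : 'I_k -> car),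
      cq a y = cq a (fun i : 'I_n =>
                       match (insub (val i) : option 'I_k) with
                       | Some j => y j
                       | None => ce i.+1 end);
  ax_C5 : forall n a (y z : 'I_n -> car),
      cq (cq a y) z = cq a (fun i => cq (y i) z);
  ax_C6 : forall (s : sym tau) (x : 'I_(arity s) -> car) n (y : 'I_n -> car),
      cq (sop x) y = sop (fun i => cq (x i) y)
}.

Section Defs.
Variables (tau : signature) (C : clone_algebra tau).

(* Congruence of the clone tau-algebra: equivalence compatible with all
   operations sigma in tau and all q_n (nullary e_i are trivially compatible). *)
Definition is_congruence (R : C -> C -> Prop) : Prop :=
  [/\ (forall x, R x x),
      (forall x y, R x y -> R y x),
      (forall x y z, R x y -> R y z -> R x z),
      (forall (s : sym tau) (x y : 'I_(arity s) -> C),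
          (forall i, R (x i) (y i)) -> R (sop x) (sop y)) &
      (forall n (a b : C) (x y : 'I_n -> C),
          R a b -> (forall i, R (x i) (y i)) -> R (cq a x) (cq b y))].

Definition theta (a b : C) : C -> C -> Prop :=
  fun x y => forall R, is_congruence R -> R a b -> R x y.

(* c is n-central: theta(c,e_1),...,theta(c,e_n) are complementary factor
   congruences. *)
Definition central (n : nat) (c : C) : Prop :=
  (forall x y : C, (forall i : 'I_n, theta c (ce C i.+1) x y) -> x = y) /\
  (forall a : 'I_n -> C, exists! u : C,
      forall i : 'I_n, theta c (ce C i.+1) (a i) u).

Definition independent (a : C) (n : nat) : Prop :=
  cq a (fun i : 'I_n => if i.+1 == n then ce C n.+1 else ce C i.+1) = a.
Definition dependent (a : C) (n : nat) : Prop := ~ independent a n.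

(* Specification of gamma(a) in nat + {omega}; None stands for omega. *)
Definition gamma_spec (a : C) (g : option nat) : Prop :=
  match g with
  | None => forall N, exists k, N < k /\ dependent a k
  | Some 0 => forall k, 0 < k -> independent a k
  | Some k => dependent a k /\ forall j, k < j -> independent a j
  end.

Definition gamma (a : C) : option nat :=
  epsilon (inhabits None) (gamma_spec a).

Definition ge_gamma (m : nat) (a : C) : Prop :=
  match gamma a with None => False | Some k => k <= m end.

End Defs.

From mathcomp Require Import all_boot.
From Stdlib Require Import Classical ClassicalEpsilon.

(* Modulo theta(c, e_j), c = q_j(c, e_1, ..., e_(j-1), e_(j+1)) is congruent
   to e_(j+1) whenever c is independent of e_j; then the distinct projections
   e_j and e_(j+1) are identified, which makes theta(c, e_j) the full relation.
   Conversely, modulo theta(c, e_i) with i <= m < j both c and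
   q_j(c, e_1, ..., e_(j-1), e_(j+1)) are congruent to e_i, so an m-central c
   is independent of every e_j with j > m.  For m >= gamma(c) the factors
   theta(c, e_i), i > m, of an n-central decomposition are therefore full and
   drop out of the intersection, and u = q_m(c, a_1, ..., a_m) is always a
   solution. *)

Section CloneCentral.
Variables (tau : signature) (C : clone_algebra tau).
Implicit Types (a b c x y : C) (R : C -> C -> Prop).

Lemma congruence_full_of_ce {R j k} : is_congruence R ->
  j != k -> R (ce C j.+1) (ce C k.+1) -> forall x y, R x y.
Proof.
case=> Rrefl _ _ _ Rcq neq_jk Rjk x y.
pose z (i : 'I_(maxn j k).+1) := if val i == j then x else y.
have j_lt : j < (maxn j k).+1 by rewrite ltnS leq_maxl.
have k_lt : k < (maxn j k).+1 by rewrite ltnS leq_maxr.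
have <- : cq (ce C j.+1) z = x by rewrite (ax_C1 z (Ordinal j_lt)) /z /= eqxx.
have <- : cq (ce C k.+1) z = y.
  by rewrite (ax_C1 z (Ordinal k_lt)) /z /= eq_sym (negbTE neq_jk).
exact: Rcq.
Qed.

Lemma theta_congruence a b : is_congruence (theta a b).
Proof.
split=> [x | x y xy | x y z xy yz | s x y xy | n a' b' x y ab' xy] R congR ab;
  case: (congR) => Rrefl Rsym Rtrans Rsop Rcq.
- exact: Rrefl.
- by apply: Rsym; apply: xy.
- exact: Rtrans (xy R congR ab) (yz R congR ab).
- by apply: Rsop => i; apply: xy.
- by apply: Rcq => [|i]; [apply: ab' | apply: xy].
Qed.

Lemma theta_pair a b : theta a b a b.
Proof. by move=> R. Qed.

Lemma theta_sym {a b x y} : theta a b x y -> theta a b y x.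
Proof. by case: (theta_congruence a b) => _ tsym _ _ _; apply: tsym. Qed.

Lemma theta_trans {a b x y z} :
  theta a b x y -> theta a b y z -> theta a b x z.
Proof. by case: (theta_congruence a b) => _ _ ttrans _ _; apply: ttrans. Qed.

Lemma theta_cq a b {n} (y : 'I_n -> C) : theta a b (cq a y) (cq b y).
Proof.
case: (theta_congruence a b) => trefl _ _ _ tcq.
by apply: tcq => [|i]; [apply: theta_pair | apply: trefl].
Qed.

Lemma theta_full_of_independent c j x y :
  independent c j.+1 -> theta c (ce C j.+1) x y.
Proof.
rewrite /independent => indep_c; set f := fun i : 'I_j.+1 => _ in indep_c.
have c_e2 : theta c (ce C j.+1) c (ce C j.+2).
  by have := theta_cq c (ce C j.+1) f; rewrite indep_c (ax_C1 f ord_max) /f /= eqxx.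
apply: (congruence_full_of_ce (theta_congruence _ _) (negbT (ltn_eqF (ltnSn j)))).
exact: theta_trans (theta_sym (theta_pair _ _)) c_e2.
Qed.

Definition separating (m : nat) c : Prop :=
  forall x y, (forall i : 'I_m, theta c (ce C i.+1) x y) -> x = y.

Lemma centralE m c : central m c <-> separating m c.
Proof.
split=> [[] // | sep_c]; split=> // a.
have a_cq (i : 'I_m) : theta c (ce C i.+1) (a i) (cq c a).
  by apply: theta_sym; rewrite -[X in theta _ _ _ X](ax_C1 a i); apply: theta_cq.
exists (cq c a); split=> // u a_u.
by apply: sep_c => i; apply: theta_trans (theta_sym (a_cq i)) (a_u i).
Qed.

Lemma independent_of_separating m c j :
  separating m c -> m < j -> independent c j.
Proof.
move=> sep_c lt_mj; apply: sep_c => i; rewrite /independent.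
set f := fun i : 'I_j => _.
have le_mj : m <= j := ltnW lt_mj.
apply: theta_trans (theta_cq c (ce C i.+1) f) _.
rewrite (ax_C1 f (widen_ord le_mj i)) /f /= ltn_eqF.
  exact: theta_sym (theta_pair _ _).
exact: leq_ltn_trans (ltn_ord i) lt_mj.
Qed.

Lemma separating_of_independent n m c :
  separating n c -> (forall j, m < j -> independent c j) -> separating m c.
Proof.
move=> sep_n indep_c x y xy; apply: sep_n => i.
have [lt_im | le_mi] := ltnP i m; first exact: (xy (Ordinal lt_im)).
by apply: theta_full_of_independent; apply: indep_c; rewrite ltnS.
Qed.

Lemma gamma_spec_of_bound c N :
  (forall k, N < k -> independent c k) -> exists g, gamma_spec c g.
Proof.
elim: N => [|N IHN] indep_c; first by exists (Some 0).
have [indep_N1 | dep_N1] := classic (independent c N.+1); last by exists (Some N.+1).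
by apply: IHN => k; rewrite leq_eqVlt => /orP[/eqP <- | /indep_c].
Qed.

Lemma gammaP c : gamma_spec c (gamma c).
Proof.
apply: epsilon_spec.
have [unbounded | bounded] := classic (forall N, exists k, N < k /\ dependent c k).
  by exists None.
have [N indep_c] : exists N, forall k, N < k -> independent c k.
  apply: NNPP => no_bound; apply: bounded => N.
  apply: NNPP => no_dep; apply: no_bound; exists N => k lt_Nk.
  by apply: NNPP => dep_k; apply: no_dep; exists k.
exact: gamma_spec_of_bound indep_c.
Qed.

Lemma ge_gammaP m c : ge_gamma m c <-> forall j, m < j -> independent c j.
Proof.
rewrite /ge_gamma; have := gammaP c.
case: (gamma c) => [[|k]|] /= gamma_c; split=> //.
- by move=> _ j /(leq_ltn_trans (leq0n m)); apply: gamma_c.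
- by move=> le_km j /(leq_ltn_trans le_km); apply: gamma_c.2.
- by move=> indep_c; rewrite leqNgt; apply/negP => /indep_c; apply: gamma_c.1.
- by move=> indep_c; have [k [/indep_c]] := gamma_c m.
Qed.

End CloneCentral.

Theorem proposition11p3 (tau : signature) (C : clone_algebra tau) (c : C) :
  (exists n : nat, central n c) ->
  forall m : nat, 1 <= m -> (central m c <-> ge_gamma m c).
Proof.
move=> [n /centralE sep_n] m _; rewrite centralE ge_gammaP.
split=> [sep_m j | indep_c]; first exact: independent_of_separating.
exact: separating_of_independent sep_n indep_c.
Qed.
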